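(* Fix $k\in[n]$ and arbitrary negotiating positions $\mu_i'\in\mathbb{R}^n$ for $i\neq k$. Then $\sup_{\mu_k'\in\mathbb{R}^n} g_k(W',P')<\infty$, where $(W',P')$ is the stable point for the matrix $M'$ with columns $\mu_1',\dots,\mu_n'$. That is, no choice of negotiating position gives agent $k$ unbounded utility, even with full knowledge of the other agents' beliefs and positions.
   Context: Fix agents $[n]=\{1,\dots,n\}$. Let $\Sigma\in\mathbb{R}^{n\times n}$ be symmetric positive definite, $\Gamma=\mathrm{diag}(\gamma_1,\dots,\gamma_n)$ with all $\gamma_i>0$, and let $M\in\mathbb{R}^{n\times n}$ be the matrix of true beliefs with $i$-th column $\mu_i=Me_i$. For a matrix of reported negotiating positions $M'\in\mathbb{R}^{n\times n}$, the stable point for $M'$ is the unique pair $(W,P)$ of real $n\times n$ matrices with $W=W^T$, $P^T=-P$ and $M'-P=2\Sigma W\Gamma$; equivalently $\mathrm{vec}(W)=\tfrac12(\Gamma\otimes\Sigma+\Sigma\otimes\Gamma)^{-1}\mathrm{vec}(M'+M'^T)$ and $P=M'-2\Sigma W\Gamma$. Here $\mathrm{vec}$ stacks columns and $e_i$ is the $i$-th standard basis vector. Agent $i$'s (true) utility at $(W,P)$ is $g_i(W,P)=w_i^T(\mu_i-Pe_i)-\gamma_i\, w_i^T\Sigma w_i$, where $w_i=We_i$. *)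

From mathcomp Require Import all_boot all_order all_algebra.
From mathcomp Require Import reals.
Set Implicit Arguments. Unset Strict Implicit. Unset Printing Implicit Defensive.
Import Order.TTheory GRing.Theory Num.Theory.
Local Open Scope ring_scope.

Definition sym_posdef (R : realType) (n : nat) (S : 'M[R]_n) : Prop :=
  S^T = S /\ forall x : 'cV[R]_n, x != 0 -> 0 < (x^T *m S *m x) 0 0.

Definition Gam (R : realType) (n : nat) (gamma : 'I_n -> R) : 'M[R]_n :=
  diag_mx (\row_i gamma i).

(* (W,P) is the stable point for M': W symmetric, P antisymmetric,
   M' - P = 2 Sigma W Gamma.  (Such a pair exists and is unique.) *)
Definition is_stable_point (R : realType) (n : nat) (Sigma : 'M[R]_n)
  (gamma : 'I_n -> R) (M' W P : 'M[R]_n) : Prop :=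
  W^T = W /\ P^T = - P /\ M' - P = 2%:R *: (Sigma *m W *m Gam gamma).

Definition utility (R : realType) (n : nat) (Sigma : 'M[R]_n)
  (gamma : 'I_n -> R) (M : 'M[R]_n) (i : 'I_n) (W P : 'M[R]_n) : R :=
  ((col i W)^T *m (col i M - col i P)) 0 0
  - gamma i * ((col i W)^T *m Sigma *m col i W) 0 0.

Definition replace_col (R : realType) (n : nat) (M0 : 'M[R]_n) (k : 'I_n)
  (v : 'cV[R]_n) : 'M[R]_n :=
  \matrix_(a, b) if b == k then v a 0 else M0 a b.

From mathcomp Require Import all_boot all_order all_algebra.
From mathcomp Require Import reals.
From mathcomp Require Import lra.
Import Order.TTheory GRing.Theory Num.Theory.
Local Open Scope ring_scope.
Set Implicit Arguments. Unset Strict Implicit.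

(* Summed over all agents the P-terms cancel: W is symmetric and P skew, so
   tr(W^T P) = 0 and sum_i g_i is a sum of the concave quadratics
   w_i.mu_i - gamma_i w_i^T Sigma w_i, bounded above.  For i <> k the stable
   point equation P e_i = mu_i' - 2 gamma_i Sigma w_i turns -g_i into the
   concave quadratic w_i.(mu_i' - mu_i) - gamma_i w_i^T Sigma w_i, whose linear
   term does not involve mu_k'.  Hence g_k = sum_i g_i - sum_(i <> k) g_i is
   bounded uniformly in mu_k'. *)

Section Dot.
Variables (R : comPzRingType) (n : nat).
Implicit Types (x y z : 'cV[R]_n) (S : 'M[R]_n).

Definition dot x y : R := (x^T *m y) 0 0.

Lemma dotBr x y z : dot x (y - z) = dot x y - dot x z.
Proof. by rewrite /dot mulmxBr !mxE. Qed.

Lemma dotZr x (c : R) y : dot x (c *: y) = c * dot x y.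
Proof. by rewrite /dot -scalemxAr mxE. Qed.

Lemma dotC x y : dot x y = dot y x.
Proof. by rewrite /dot -[in RHS](trmxK x) -trmx_mul [RHS]mxE. Qed.

Lemma dotBl x y z : dot (x - y) z = dot x z - dot y z.
Proof. by rewrite dotC dotBr !(dotC z). Qed.

Lemma dot_sym_mx S x y : S^T = S -> dot x (S *m y) = dot y (S *m x).
Proof. by move=> symS; rewrite dotC /dot trmx_mul symS mulmxA. Qed.

End Dot.

Section ConcaveQuadratic.
Variables (R : realType) (n : nat) (S : 'M[R]_n) (a : 'cV[R]_n) (c : R).
Hypotheses (pdS : sym_posdef S) (c_gt0 : 0 < c).

Lemma posdef_unitmx : S \in unitmx.
Proof.
rewrite unitmxE unitfE; apply/negP => /det0P [v v0 vS0].
have := pdS.2 v^T; rewrite trmx_eq0 trmxK vS0 mul0mx mxE ltxx.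
by move/(_ v0).
Qed.

Lemma posdef_form_ge0 x : 0 <= dot x (S *m x).
Proof.
have [->|x0] := eqVneq x 0; first by rewrite /dot !mulmx0 mxE.
by apply/ltW; rewrite /dot mulmxA; exact: pdS.2.
Qed.

Definition concave_quad (x : 'cV[R]_n) : R := dot x a - c * dot x (S *m x).

Definition quad_argmax : 'cV[R]_n := (2 * c)^-1 *: (invmx S *m a).

Lemma concave_quad_le_argmax x : concave_quad x <= concave_quad quad_argmax.
Proof.
set u := quad_argmax; have symS := pdS.1.
have Su : S *m u = (2 * c)^-1 *: a by rewrite -scalemxAr mulKVmx ?posdef_unitmx.
have dot_a y : dot y a = 2 * c * dot y (S *m u).
  by rewrite Su dotZr mulrA mulfV ?mul1r // gt_eqF // mulr_gt0.
(* concave_quad u - concave_quad x = c (x - u)^T S (x - u) *)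
have := mulr_ge0 (ltW c_gt0) (posdef_form_ge0 (x - u)).
rewrite /concave_quad !dot_a mulmxBr dotBr !dotBl (dot_sym_mx u x symS); nra.
Qed.

End ConcaveQuadratic.

Section StablePoint.
Variables (R : realType) (n : nat) (Sigma : 'M[R]_n) (gamma : 'I_n -> R).
Implicit Types (M W P : 'M[R]_n) (i : 'I_n).

Lemma col_Gam i : col i (Gam gamma) = gamma i *: delta_mx i 0.
Proof.
apply/matrixP => a b; rewrite !mxE (ord1 b) eqxx andbT.
by case: (eqVneq a i) => [->|ne]; rewrite ?mulr1 ?mulr0 // eq_sym (negbTE ne).
Qed.

Lemma col_mulmx (A B : 'M[R]_n) i : col i (A *m B) = A *m col i B.
Proof. by rewrite !colE mulmxA. Qed.

Lemma stable_point_col M' W P i : is_stable_point Sigma gamma M' W P ->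
  col i P = col i M' - (2 * gamma i) *: (Sigma *m col i W).
Proof.
move=> [_ [_ eqM']].
have := congr1 (col i) eqM'; rewrite linearB linearZ /= col_mulmx col_Gam.
rewrite -scalemxAr -mulmxA -colE scalerA => h.
by rewrite -h opprB addrC subrK.
Qed.

Lemma utilityE M W P i : utility Sigma gamma M i W P =
  concave_quad Sigma (col i M) (gamma i) (col i W) - dot (col i W) (col i P).
Proof. by rewrite /utility /concave_quad /dot mulmxA mulmxBr !mxE; lra. Qed.

Lemma sum_dot_col_sym_skew W P : W^T = W -> P^T = - P ->
  \sum_i dot (col i W) (col i P) = 0.
Proof.
move=> symW skewP.
have -> : \sum_i dot (col i W) (col i P) = \tr (W^T *m P).
  by apply: eq_bigr => i _; rewrite /dot tr_col !mxE; apply: eq_bigr => j _; rewrite !mxE.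
have trN : \tr (W^T *m P) = - \tr (W^T *m P).
  by rewrite -[LHS]mxtrace_tr trmx_mul trmxK skewP mulNmx linearN mxtrace_mulC symW.
lra.
Qed.

Lemma sum_utility M M' W P : is_stable_point Sigma gamma M' W P ->
  \sum_i utility Sigma gamma M i W P =
  \sum_i concave_quad Sigma (col i M) (gamma i) (col i W).
Proof.
move=> [symW [skewP _]].
under eq_bigr do rewrite utilityE.
by rewrite sumrB sum_dot_col_sym_skew // subr0.
Qed.

Lemma oppr_utility_stable_point M M' W P i : is_stable_point Sigma gamma M' W P ->
  - utility Sigma gamma M i W P =
  concave_quad Sigma (col i M' - col i M) (gamma i) (col i W).
Proof.
move=> stWP; rewrite utilityE (stable_point_col i stWP) /concave_quad.
rewrite !dotBr dotZr; lra.
Qed.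

End StablePoint.

Lemma col_replace_col_neq (R : realType) (n : nat) (M0 : 'M[R]_n) k v i :
  i != k -> col i (replace_col M0 k v) = col i M0.
Proof. by move=> ne; apply/matrixP => a b; rewrite !mxE (negbTE ne). Qed.

Theorem mainTheorem5 (R : realType) (n : nat) (Sigma : 'M[R]_n)
  (gamma : 'I_n -> R) (M : 'M[R]_n) (k : 'I_n) (M0 : 'M[R]_n) :
  sym_posdef Sigma ->
  (forall i, 0 < gamma i) ->
  exists B : R, forall (mu'k : 'cV[R]_n) (W' P' : 'M[R]_n),
    is_stable_point Sigma gamma (replace_col M0 k mu'k) W' P' ->
    utility Sigma gamma M k W' P' <= B.
Proof.
move=> pdS gamma_gt0.
pose qmax a i := concave_quad Sigma a (gamma i) (quad_argmax Sigma a (gamma i)).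
exists (\sum_i qmax (col i M) i + \sum_(i | i != k) qmax (col i M0 - col i M) i).
move=> mu W P stWP; pose g i := utility Sigma gamma M i W P.
rewrite -/(g k); have -> : g k = \sum_i g i + \sum_(i | i != k) - g i.
  by rewrite (bigD1 k) //= sumrN; lra.
apply: lerD; rewrite /g ?(sum_utility _ stWP); apply: ler_sum => i.
  by move=> _; exact: concave_quad_le_argmax.
move=> ne; rewrite (oppr_utility_stable_point _ _ stWP) col_replace_col_neq //.
exact: concave_quad_le_argmax.
Qed.
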